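(* Let $\rho$ be a primitive $k$th root of unity, $0\le a\le k-1$, $L\in\mathbb Z_{\ge1}$, $\delta>0$, $C>0$. For all $N\ge1$ and $z$ with $\mathrm{Re}(z)\le-\delta$, $|z|\le C$, $$-\chi_a(-z,N)=\sum_{\ell=0}^{L}\frac{(-1)^\ell}{\ell!}\Big(\frac{kz}{N}\Big)^{\ell-1}B_\ell(a/k)\,\mathrm{Li}_{2-\ell}(\rho^{-a}e^{z})+O\Big(\frac1{N^L}\Big),$$ with implied constant depending only on $L,k,\delta,C$.
   Context: For $\mathrm{Re}(w)>0$, $\chi_a(w,N):=\sum_{r\ge1}\frac{\rho^{-ra}}{r}\frac{e^{-rw}e^{raw/N}}{e^{krw/N}-1}$. Bernoulli polynomials: $ze^{\lambda z}/(e^z-1)=\sum B_n(\lambda)z^n/n!$. Polylogarithms $\mathrm{Li}_s(u)=\sum_{n\ge1}u^n/n^s$ for $|u|<1$. *)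

From Stdlib Require Import Reals Lra List Arith ClassicalEpsilon.
Import ListNotations.
Open Scope R_scope.

Definition Cplx : Type := (R * R)%type.
Definition Re (z : Cplx) : R := fst z.
Definition Im (z : Cplx) : R := snd z.
Definition RtoC (x : R) : Cplx := (x, 0).
Definition C0 : Cplx := (0, 0).
Definition C1 : Cplx := (1, 0).
Definition Cadd (x y : Cplx) : Cplx := (Re x + Re y, Im x + Im y).
Definition Copp (x : Cplx) : Cplx := (- Re x, - Im x).
Definition Csub (x y : Cplx) : Cplx := Cadd x (Copp y).
Definition Cmul (x y : Cplx) : Cplx :=
  (Re x * Re y - Im x * Im y, Re x * Im y + Im x * Re y).
Definition Cinv (x : Cplx) : Cplx :=
  (Re x / (Re x ^ 2 + Im x ^ 2), - Im x / (Re x ^ 2 + Im x ^ 2)).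
Definition Cdiv (x y : Cplx) : Cplx := Cmul x (Cinv y).
Definition Cmod (x : Cplx) : R := sqrt (Re x ^ 2 + Im x ^ 2).
Definition Cexp (z : Cplx) : Cplx := (exp (Re z) * cos (Im z), exp (Re z) * sin (Im z)).
Fixpoint Cpow (x : Cplx) (n : nat) : Cplx :=
  match n with O => C1 | S m => Cmul x (Cpow x m) end.
Definition Cpowz (x : Cplx) (n : Z) : Cplx :=
  match n with
  | Z0 => C1
  | Zpos p => Cpow x (Pos.to_nat p)
  | Zneg p => Cinv (Cpow x (Pos.to_nat p))
  end.

Fixpoint Cpartial (f : nat -> Cplx) (n : nat) : Cplx :=
  match n with O => C0 | S m => Cadd (Cpartial f m) (f m) end.
Definition has_sum (f : nat -> Cplx) (s : Cplx) : Prop :=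
  Un_cv (fun n => Cmod (Csub (Cpartial f n) s)) 0.
(** the sum of a convergent series (an arbitrary value if divergent) *)
Definition Csum (f : nat -> Cplx) : Cplx := epsilon (inhabits C0) (has_sum f).


Definition primitive_root (k : nat) (rho : Cplx) : Prop :=
  Cpow rho k = C1 /\ forall j : nat, (0 < j < k)%nat -> Cpow rho j <> C1.

(** * Bernoulli numbers and polynomials
   B_0 = 1, sum_{j=0}^{n} C(n+1,j) B_j = 0 for n >= 1 (so B_1 = -1/2),
   and B_n(x) = sum_j C(n,j) B_j x^(n-j); these are the coefficients of
   z e^(x z)/(e^z - 1) = sum B_n(x) z^n / n!. *)
Fixpoint bern_aux (n : nat) : list R :=
  match n with
  | O => [1]
  | S m =>
      let l := bern_aux m in
      l ++ [ - / INR (S n) *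
             fold_right Rplus 0 (map (fun j => Binomial.C (S n) j * nth j l 0) (seq 0 n)) ]
  end.
Definition bernoulli (n : nat) : R := nth n (bern_aux n) 0.
Definition bernpoly (n : nat) (x : R) : R :=
  fold_right Rplus 0
    (map (fun j => Binomial.C n j * bernoulli j * x ^ (n - j)) (seq 0 (S n))).

Definition Li (s : Z) (u : Cplx) : Cplx :=
  Csum (fun i => Cmul (Cpow u (S i)) (RtoC (powerRZ (INR (S i)) (- s)))).

Definition chi (k : nat) (rho : Cplx) (a : nat) (w : Cplx) (N : nat) : Cplx :=
  Csum (fun i =>
    let r := INR (S i) in
    Cdiv (Cmul (Cmul (Cpow (Cinv rho) (S i * a)) (RtoC (/ r)))
               (Cmul (Cexp (Cmul (RtoC (- r)) w))
                     (Cexp (Cmul (RtoC (r * INR a / INR N)) w))))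
         (Csub (Cexp (Cmul (RtoC (INR k * r / INR N)) w)) C1)).

Definition chi_expansion (k : nat) (rho : Cplx) (a : nat) (z : Cplx) (N L : nat) : Cplx :=
  Cpartial (fun l =>
    Cmul (Cmul (RtoC ((-1) ^ l / INR (Factorial.fact l) * bernpoly l (INR a / INR k)))
               (Cpowz (Cmul (RtoC (INR k / INR N)) z) (Z.of_nat l - 1)))
         (Li (2 - Z.of_nat l) (Cmul (Cpow (Cinv rho) a) (Cexp z)))) (S L).

(* With lam = a/k, u = rho^(-a) e^z and x_r = k r (-z) / N, the r-th term of chi_a(-z, N) is
   (u^r / r) e^(lam x_r) / (e^(x_r) - 1).  Replacing this generating function of the Bernoulli
   polynomials by its truncated Laurent expansion sum_(l <= L) B_l(lam) x^(l-1) / l! and summing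
   over r gives exactly minus the expansion, the powers x_r^(l-1) producing Li_(2-l)(u).
   On the sector Re x >= (delta / C) |x| the truncation error is O(|x|^L): trivially for
   |x| >= 1, and for |x| < 1 because multiplied by x (e^x - 1) it becomes a difference of Taylor
   remainders of exponentials.  As |x_r| <= k C r / N and |u| <= e^(-delta), the total error is
   at most a constant times (k C / N)^L sum_r r^L e^(-delta r). *)

From Stdlib Require Import Reals Lra Lia ClassicalEpsilon FunctionalExtensionality List.
From Pilot Require Import Defs.
From Coquelicot Require Import Coquelicot.
Open Scope R_scope.
Notation fact := Factorial.fact.

(* [ring] and [field] only recognise the carriers [R] and [C] syntactically, not [Cplx] or
   the carriers of Coquelicot's algebraic structures. *)
Ltac toR := match goal with |- @eq _ ?a ?b => change (@eq R a b) end.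
Ltac toC := match goal with |- @eq _ ?a ?b => change (@eq C a b) end.

Lemma Defs_Cpow_eq x n : Defs.Cpow x n = Cpow x n.
Proof. induction n as [|n IH]; [reflexivity|]. simpl. now rewrite IH. Qed.

Lemma exp_le x y : x <= y -> exp x <= exp y.
Proof. intros [H|H]; [left; now apply exp_increasing | now subst]. Qed.

Lemma Cexp_add x y : Cexp (Cplus x y) = Cmult (Cexp x) (Cexp y).
Proof.
  destruct x as [a b], y as [c d]; unfold Cexp, Cplus, Cmult, Defs.Re, Defs.Im; simpl.
  rewrite exp_plus, cos_plus, sin_plus. f_equal; ring.
Qed.

Lemma Cmod_Cexp x : Cmod (Cexp x) = exp (fst x).
Proof.
  destruct x as [a b]; unfold Cexp, Cmod, Defs.Re, Defs.Im; simpl.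
  replace (exp a * cos b * (exp a * cos b * 1) + exp a * sin b * (exp a * sin b * 1))
    with (exp a * exp a) by (pose proof (sin2_cos2 b) as H; unfold Rsqr in H; nra).
  apply sqrt_square. left; apply exp_pos.
Qed.

Lemma Cexp_0 : Cexp (RtoC 0) = RtoC 1.
Proof.
  unfold Cexp, RtoC, Defs.Re, Defs.Im; simpl. rewrite exp_0, cos_0, sin_0.
  f_equal; ring.
Qed.

Lemma Cexp_INR_mult n z : Cexp (Cmult (RtoC (INR n)) z) = Cpow (Cexp z) n.
Proof.
  induction n as [|n IH].
  - replace (Cmult (RtoC (INR 0)) z) with (RtoC 0) by (apply injective_projections; simpl; ring).
    apply Cexp_0.
  - replace (Cmult (RtoC (INR (S n))) z) with (Cplus z (Cmult (RtoC (INR n)) z))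
      by (rewrite S_INR; apply injective_projections; simpl; ring).
    now rewrite Cexp_add, IH.
Qed.

Lemma Cexp_sub1_ge (x : C) : exp (fst x) - 1 <= Cmod (Cminus (Cexp x) (RtoC 1)).
Proof.
  pose proof (Cmod_triangle (Cminus (Cexp x) (RtoC 1)) (RtoC 1)) as H.
  assert (E : Cplus (Cminus (Cexp x) (RtoC 1)) (RtoC 1) = Cexp x) by (toC; ring).
  rewrite E, Cmod_Cexp, Cmod_R, Rabs_R1 in H. lra.
Qed.

Lemma Re_le_Cexp_sub1 (x : C) : fst x <= Cmod (Cminus (Cexp x) (RtoC 1)).
Proof. pose proof (Cexp_sub1_ge x). pose proof (exp_ineq1_le (fst x)). lra. Qed.

Lemma sum_n_head {G : AbelianMonoid} (g : nat -> G) n :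
  sum_n g (S n) = plus (g O) (sum_n (fun i => g (S i)) n).
Proof. unfold sum_n. rewrite sum_Sn_m by lia. now rewrite sum_n_m_S. Qed.

Lemma sum_n_rev {G : AbelianMonoid} (g : nat -> G) n :
  sum_n g n = sum_n (fun i => g (n - i)%nat) n.
Proof.
  revert g; induction n as [|n IH]; intros g; [now rewrite !sum_O|].
  rewrite (sum_Sn (fun i => g (S n - i)%nat)).
  rewrite (sum_n_ext_loc (fun i => g (S n - i)%nat) (fun i => g (S (n - i)))).
  2:{ intros i Hi. f_equal. lia. }
  rewrite <- (IH (fun i => g (S i))), sum_n_head, Nat.sub_diag. apply plus_comm.
Qed.

Lemma sum_n_antidiagonal {G : AbelianMonoid} (h : nat -> nat -> G) n :
  sum_n (fun a => sum_n (fun b => h a b) (n - a)%nat) n =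
  sum_n (fun s => sum_n (fun a => h a (s - a)%nat) s) n.
Proof.
  induction n as [|n IH]; [now rewrite !sum_O|].
  rewrite sum_Sn, (sum_Sn (fun s => sum_n (fun a => h a (s - a)%nat) s)), <- IH.
  rewrite (sum_n_ext_loc (fun a => sum_n (fun b => h a b) (S n - a)%nat)
             (fun a => plus (sum_n (fun b => h a b) (n - a)%nat) (h a (S n - a)%nat))).
  2:{ intros a Ha. replace (S n - a)%nat with (S (n - a)) by lia. now rewrite sum_Sn. }
  rewrite sum_n_plus, (sum_Sn (fun a => h a (S n - a)%nat)), Nat.sub_diag, sum_O.
  now rewrite <- !plus_assoc.
Qed.

Lemma fold_right_seq_sum_n (f : nat -> R) m s :
  fold_right Rplus 0 (map f (seq s (S m))) = sum_n (fun i => f (s + i)%nat) m.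
Proof.
  revert s; induction m as [|m IH]; intros s.
  - rewrite sum_O, Nat.add_0_r. simpl. ring.
  - change (f s + fold_right Rplus 0 (map f (seq (S s) (S m))) =
            sum_n (fun i => f (s + i)%nat) (S m)).
    rewrite IH, sum_n_head, Nat.add_0_r. unfold plus; simpl.
    f_equal. apply sum_n_ext. intros; f_equal; lia.
Qed.

Lemma sum_n_R_mult_l (a : R) (u : nat -> R) n : a * sum_n u n = sum_n (fun i => a * u i) n.
Proof. symmetry. apply (sum_n_mult_l (K := R_Ring)). Qed.

Lemma sum_n_R_mult_r (a : R) (u : nat -> R) n : sum_n u n * a = sum_n (fun i => u i * a) n.
Proof. symmetry. apply (sum_n_mult_r (K := R_Ring)). Qed.

Lemma sum_n_C_mult_l (a : C) (u : nat -> C) n : Cmult a (sum_n u n) = sum_n (fun i => Cmult a (u i)) n.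
Proof. symmetry. apply (sum_n_mult_l (K := C_Ring)). Qed.

Lemma sum_n_C_mult_r (a : C) (u : nat -> C) n : Cmult (sum_n u n) a = sum_n (fun i => Cmult (u i) a) n.
Proof. symmetry. apply (sum_n_mult_r (K := C_Ring)). Qed.

Lemma sum_n_zero_R (f : nat -> R) n : (forall i, (i <= n)%nat -> f i = 0) -> sum_n f n = 0.
Proof. intros H. rewrite (sum_n_ext_loc f (fun _ => 0)) by exact H. rewrite sum_n_const. toR; ring. Qed.

Lemma RtoC_sum_n (f : nat -> R) n : RtoC (sum_n f n) = sum_n (fun i => RtoC (f i)) n.
Proof.
  induction n as [|n IH]; [now rewrite !sum_O|].
  rewrite !sum_Sn. change (RtoC (sum_n f n + f (S n)) = Cplus (sum_n (fun i => RtoC (f i)) n) (f (S n))).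
  now rewrite RtoC_plus, IH.
Qed.

Lemma C_Sn_n n : Binomial.C (S n) n = INR (S n).
Proof.
  unfold Binomial.C. replace (S n - n)%nat with 1%nat by lia.
  change (fact (S n)) with (S n * fact n)%nat. rewrite mult_INR.
  pose proof (INR_fact_neq_0 n). simpl (INR (fact 1)). field. auto.
Qed.

Lemma C_mul_C n a b : (a + b <= n)%nat ->
  Binomial.C n (a + b) * Binomial.C (a + b) a = Binomial.C n a * Binomial.C (n - a) b.
Proof.
  intros H. unfold Binomial.C.
  replace (a + b - a)%nat with b by lia. replace (n - a - b)%nat with (n - (a + b))%nat by lia.
  pose proof (INR_fact_neq_0 n). pose proof (INR_fact_neq_0 a). pose proof (INR_fact_neq_0 b).
  pose proof (INR_fact_neq_0 (a + b)). pose proof (INR_fact_neq_0 (n - a)).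
  pose proof (INR_fact_neq_0 (n - (a + b))).
  field. repeat split; auto.
Qed.

Lemma bern_aux_length n : length (bern_aux n) = S n.
Proof. induction n as [|n IH]; [reflexivity|]. simpl. rewrite length_app, IH. simpl. lia. Qed.

Lemma nth_bern_aux j n : (j <= n)%nat -> nth j (bern_aux n) 0 = bernoulli j.
Proof.
  intros Hj. unfold bernoulli. replace n with ((n - j) + j)%nat by lia.
  induction (n - j)%nat as [|d IH]; [reflexivity|].
  change (bern_aux (S d + j)) with (bern_aux (S (d + j))). simpl bern_aux.
  rewrite app_nth1; [exact IH|]. rewrite bern_aux_length. lia.
Qed.

Lemma bernoulli_S m : bernoulli (S m) =
  - / INR (S (S m)) * sum_n (fun j => Binomial.C (S (S m)) j * bernoulli j) m.
Proof.
  unfold bernoulli at 1. cbn [bern_aux].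
  rewrite app_nth2; rewrite bern_aux_length; [|lia].
  rewrite Nat.sub_diag. cbn [nth]. f_equal.
  rewrite fold_right_seq_sum_n. apply sum_n_ext_loc. intros j Hj. simpl.
  now rewrite nth_bern_aux.
Qed.

Lemma bernoulli_C_sum m :
  sum_n (fun j => Binomial.C (S m) j * bernoulli j) m = if Nat.eqb m 0 then 1 else 0.
Proof.
  destruct m as [|m].
  - rewrite sum_O. simpl. unfold bernoulli; simpl. rewrite C_n_0. ring.
  - simpl Nat.eqb. rewrite sum_Sn, C_Sn_n, bernoulli_S. unfold plus; simpl.
    assert (INR (S (S m)) <> 0) by (apply not_0_INR; lia).
    field. auto.
Qed.

Lemma bernpoly_sum_n l x :
  bernpoly l x = sum_n (fun j => Binomial.C l j * bernoulli j * x ^ (l - j)) l.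
Proof. unfold bernpoly. now rewrite fold_right_seq_sum_n. Qed.

Lemma bernpoly_C_sum s x :
  sum_n (fun l => Binomial.C (S s) l * bernpoly l x) s = INR (S s) * x ^ s.
Proof.
  set (h := fun a b => Binomial.C (S s) (a + b) * Binomial.C (a + b) a * bernoulli b * x ^ a).
  rewrite (sum_n_ext_loc _ (fun l => sum_n (fun i => h i (l - i)%nat) l)).
  2:{ intros l Hl. rewrite bernpoly_sum_n, sum_n_rev, sum_n_R_mult_l.
      apply sum_n_ext_loc. intros i Hi. unfold h.
      replace (i + (l - i))%nat with l by lia. replace (l - (l - i))%nat with i by lia.
      rewrite <- pascal_step1 by lia. toR; ring. }
  rewrite <- (sum_n_antidiagonal (G := R_AbelianMonoid) h).
  rewrite (sum_n_ext_loc _ (fun a => Binomial.C (S s) a * x ^ a * if Nat.eqb (s - a) 0 then 1 else 0)).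
  2:{ intros a Ha. rewrite <- bernoulli_C_sum, sum_n_R_mult_l.
      apply sum_n_ext_loc. intros b Hb. unfold h.
      rewrite C_mul_C by lia. replace (S s - a)%nat with (S (s - a)) by lia. toR; ring. }
  destruct s as [|s].
  - rewrite sum_O. simpl. rewrite C_n_0. ring.
  - rewrite sum_Sn, sum_n_zero_R.
    2:{ intros i Hi. replace (S s - i)%nat with (S (s - i)) by lia. simpl. toR; ring. }
    rewrite Nat.sub_diag, C_Sn_n. unfold plus; simpl. ring.
Qed.

Lemma bernpoly_fact_sum s x :
  sum_n (fun l => bernpoly l x / (INR (fact l) * INR (fact (S s - l)))) s = x ^ s / INR (fact s).
Proof.
  rewrite (sum_n_ext_loc _ (fun l => Binomial.C (S s) l * bernpoly l x * / INR (fact (S s)))).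
  2:{ intros l Hl. unfold Binomial.C. pose proof (INR_fact_neq_0 (S s)).
      pose proof (INR_fact_neq_0 l). pose proof (INR_fact_neq_0 (S s - l)).
      toR; field. auto. }
  rewrite <- sum_n_R_mult_r. unfold Rdiv. rewrite bernpoly_C_sum.
  change (fact (S s)) with (S s * fact s)%nat. rewrite mult_INR.
  pose proof (INR_fact_neq_0 s). assert (INR (S s) <> 0) by (apply not_0_INR; lia).
  toR; field. auto.
Qed.

Definition exp_taylor_poly (m : nat) (y : C) : C :=
  sum_n (fun n => Cmult (RtoC (/ INR (fact n))) (Cpow y n)) m.

Lemma fst_sum_n (f : nat -> C) m : fst (sum_n f m) = sum_n (fun n => fst (f n)) m.
Proof.
  induction m as [|m IH]; [now rewrite !sum_O|].
  rewrite !sum_Sn. simpl. now rewrite <- IH.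
Qed.

Lemma Cmod_le_Rabs_add (w : C) : Cmod w <= Rabs (fst w) + Rabs (snd w).
Proof.
  pose proof (Rabs_pos (fst w)). pose proof (Rabs_pos (snd w)).
  unfold Cmod. rewrite <- (Rabs_pos_eq (Rabs (fst w) + Rabs (snd w))) by lra.
  rewrite <- sqrt_Rsqr_abs. apply sqrt_le_1_alt. unfold Rsqr.
  rewrite <- (Rabs_pos_eq (fst w ^ 2)), <- (Rabs_pos_eq (snd w ^ 2)) by apply pow2_ge_0.
  rewrite <- !RPow_abs. nra.
Qed.

(* The real function [t |-> Re (c y^j e^(t y))]; Lagrange's form of Taylor's theorem
   applied to it on [0, 1] controls the real and imaginary parts of [e^y - exp_taylor_poly m y]. *)
Definition exp_ray (c y : C) (j : nat) (t : R) : R :=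
  fst (Cmult c (Cmult (Cpow y j) (Cexp (Cmult (RtoC t) y)))).

Lemma exp_ray_eq c y j t : exp_ray c y j t =
  fst (Cmult c (Cpow y j)) * (exp (t * fst y) * cos (t * snd y))
  - snd (Cmult c (Cpow y j)) * (exp (t * fst y) * sin (t * snd y)).
Proof.
  unfold exp_ray. rewrite Cmult_assoc. destruct (Cmult c (Cpow y j)) as [p q].
  destruct y as [a b]. unfold Cexp, Defs.Re, Defs.Im. simpl.
  replace (t * a - 0 * b) with (t * a) by ring. replace (t * b + 0 * a) with (t * b) by ring.
  ring.
Qed.

Lemma is_derive_exp_ray c y j t : is_derive (exp_ray c y j) t (exp_ray c y (S j) t).
Proof.
  apply (is_derive_ext (fun t => fst (Cmult c (Cpow y j)) * (exp (t * fst y) * cos (t * snd y))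
    - snd (Cmult c (Cpow y j)) * (exp (t * fst y) * sin (t * snd y)))).
  { intros; symmetry; apply exp_ray_eq. }
  rewrite exp_ray_eq.
  replace (Cmult c (Cpow y (S j))) with (Cmult (Cmult c (Cpow y j)) y) by (simpl; ring).
  destruct (Cmult c (Cpow y j)) as [p q]. destruct y as [a b]. simpl.
  auto_derive; [auto|]. ring.
Qed.

Lemma Derive_n_exp_ray c y j : Derive_n (exp_ray c y 0) j = exp_ray c y j.
Proof.
  induction j as [|j IH]; [reflexivity|].
  apply functional_extensionality; intro t. simpl. rewrite IH.
  apply is_derive_unique, is_derive_exp_ray.
Qed.

Lemma exp_ray_0 c y j : exp_ray c y j 0 = fst (Cmult c (Cpow y j)).
Proof. rewrite exp_ray_eq, !Rmult_0_l, exp_0, cos_0, sin_0. ring. Qed.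

Lemma exp_ray_1 c y : exp_ray c y 0 1 = fst (Cmult c (Cexp y)).
Proof.
  unfold exp_ray. simpl Cpow. rewrite Cmult_1_l.
  f_equal. f_equal. f_equal. apply injective_projections; simpl; ring.
Qed.

Lemma Re_mult_exp_taylor_poly c y m :
  fst (Cmult c (exp_taylor_poly m y)) =
  sum_f_R0 (fun n => (1 - 0) ^ n / INR (fact n) * Derive_n (exp_ray c y 0) n 0) m.
Proof.
  unfold exp_taylor_poly. rewrite sum_n_C_mult_l, fst_sum_n, <- sum_n_Reals.
  apply sum_n_ext. intros n. rewrite Derive_n_exp_ray, exp_ray_0.
  replace (Cmult c (Cmult (RtoC (/ INR (fact n))) (Cpow y n)))
    with (Cmult (RtoC (/ INR (fact n))) (Cmult c (Cpow y n))) by ring.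
  destruct (Cmult c (Cpow y n)) as [p q]. simpl.
  rewrite Rminus_0_r, pow1. field. apply INR_fact_neq_0.
Qed.

Lemma Re_mult_exp_taylor_rem c y m : Cmod y <= 1 ->
  Rabs (fst (Cmult c (Cminus (Cexp y) (exp_taylor_poly m y)))) <= Cmod c * 3 * Cmod y ^ (S m).
Proof.
  intros Hy.
  destruct (Taylor_Lagrange (exp_ray c y 0) m 0 1 Rlt_0_1) as [t [[Ht0 Ht1] Heq]].
  { intros s Hs k Hk. destruct k; [exact I|]. simpl. rewrite Derive_n_exp_ray.
    eexists. apply is_derive_exp_ray. }
  replace (Cmult c (Cminus (Cexp y) (exp_taylor_poly m y)))
    with (Cminus (Cmult c (Cexp y)) (Cmult c (exp_taylor_poly m y))) by ring.
  change (fst (Cminus ?a ?b)) with (fst a - fst b).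
  rewrite Re_mult_exp_taylor_poly, <- exp_ray_1, Heq, Derive_n_exp_ray.
  rewrite Rminus_0_r, pow1.
  match goal with |- Rabs (?A + ?B - ?A) <= _ => replace (A + B - A) with B by ring end.
  assert (Hfact : 1 <= INR (fact (S m))) by (apply (le_INR 1), Factorial.lt_O_fact).
  assert (Hexp : exp (t * fst y) <= 3).
  { pose proof (re_le_Cmod y) as Hre. unfold Re in Hre.
    apply Rle_trans with (exp 1); [apply exp_le | apply exp_le_3].
    pose proof (Rle_abs (fst y)). pose proof (Rabs_pos (fst y)).
    apply Rle_trans with (t * Rabs (fst y)); [apply Rmult_le_compat_l|]; nra. }
  rewrite Rabs_mult, Rabs_pos_eq by (apply Rlt_le, Rdiv_lt_0_compat; lra).
  apply Rle_trans with (Rabs (exp_ray c y (S m) t)).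
  { rewrite <- (Rmult_1_l (Rabs _)) at 2. apply Rmult_le_compat_r; [apply Rabs_pos|].
    unfold Rdiv. rewrite Rmult_1_l, <- Rinv_1. apply Rinv_le_contravar; lra. }
  eapply Rle_trans; [apply re_le_Cmod|]. unfold exp_ray, Re.
  rewrite !Cmod_mult, Cmod_pow, Cmod_Cexp. simpl fst. rewrite Rmult_0_l, Rminus_0_r.
  pose proof (Cmod_ge_0 c). pose proof (pow_le _ (S m) (Cmod_ge_0 y)).
  replace (Cmod c * 3 * Cmod y ^ S m) with (Cmod c * (Cmod y ^ S m * 3)) by ring.
  apply Rmult_le_compat_l; auto. apply Rmult_le_compat_l; auto.
Qed.

Lemma Cexp_taylor_rem m y : Cmod y <= 1 ->
  Cmod (Cminus (Cexp y) (exp_taylor_poly m y)) <= 6 * Cmod y ^ (S m).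
Proof.
  intros Hy.
  pose proof (Re_mult_exp_taylor_rem (RtoC 1) y m Hy) as Hre.
  pose proof (Re_mult_exp_taylor_rem (0, -1) y m Hy) as Him.
  rewrite Cmult_1_l, Cmod_R, Rabs_R1 in Hre.
  replace (Cmod (0, -1)) with 1 in Him
    by (unfold Cmod; simpl; replace (0 * (0 * 1) + -1 * (-1 * 1)) with 1 by ring; now rewrite sqrt_1).
  replace (fst (Cmult (0, -1) (Cminus (Cexp y) (exp_taylor_poly m y))))
    with (snd (Cminus (Cexp y) (exp_taylor_poly m y))) in Him
    by (destruct (Cminus (Cexp y) (exp_taylor_poly m y)); simpl; ring).
  eapply Rle_trans; [apply Cmod_le_Rabs_add | lra].
Qed.

Lemma Cmod_sum_n_le (f : nat -> C) n : Cmod (sum_n f n) <= sum_n (fun i => Cmod (f i)) n.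
Proof. exact (@norm_sum_n_m C_AbsRing C_NormedModule f 0 n). Qed.

Lemma sum_n_le_const (f : nat -> R) n B :
  (forall i, (i <= n)%nat -> f i <= B) -> sum_n f n <= INR (S n) * B.
Proof.
  intros H. induction n as [|n IH].
  - rewrite sum_O. simpl. specialize (H O (le_n O)). lra.
  - rewrite sum_Sn, S_INR. change (plus ?a ?b) with (a + b).
    assert (sum_n f n <= INR (S n) * B) by (apply IH; intros; apply H; lia).
    specialize (H (S n) (le_n _)). lra.
Qed.

Lemma Cpowz_nat x m : Cpowz x (Z.of_nat m) = Cpow x m.
Proof. destruct m; [reflexivity|]. simpl. rewrite SuccNat2Pos.id_succ. apply Defs_Cpow_eq. Qed.

Lemma Cpowz_pred_mult x l : x <> RtoC 0 -> Cmult (Cpowz x (Z.of_nat l - 1)) x = Cpow x l.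
Proof.
  intros Hx. destruct l.
  - change (Cmult (Cinv (Cmult x (RtoC 1))) x = RtoC 1). field.
    intro H. apply Hx. rewrite <- H. ring.
  - replace (Z.of_nat (S l) - 1)%Z with (Z.of_nat l) by lia.
    rewrite Cpowz_nat, Cpow_S. ring.
Qed.

Lemma Cmod_Cpowz_pred_le x l L : 1 <= Cmod x -> (l <= L)%nat ->
  Cmod (Cpowz x (Z.of_nat l - 1)) <= Cmod x ^ L.
Proof.
  intros Hx Hl. destruct l.
  - change (Cmod (Cinv (Cmult x (RtoC 1))) <= Cmod x ^ L). rewrite Cmult_1_r.
    assert (x <> RtoC 0) by (intro H; rewrite H, Cmod_R, Rabs_R0 in Hx; lra).
    rewrite Cmod_inv by auto. apply Rle_trans with 1; [|now apply pow_R1_Rle].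
    rewrite <- Rinv_1. apply Rinv_le_contravar; lra.
  - replace (Z.of_nat (S l) - 1)%Z with (Z.of_nat l) by lia.
    rewrite Cpowz_nat, Cmod_pow. apply Rle_pow; auto. lia.
Qed.

Definition bern_coef (lam : R) (l : nat) : C := RtoC (bernpoly l lam / INR (fact l)).

Definition bern_gen (lam : R) (x : C) : C :=
  Cdiv (Cexp (Cmult (RtoC lam) x)) (Cminus (Cexp x) (RtoC 1)).

(* [bern_laurent L lam] truncates the Laurent expansion of [bern_gen lam] at 0 after degree [L - 1]. *)
Definition bern_laurent (L : nat) (lam : R) (x : C) : C :=
  sum_n (fun l => Cmult (bern_coef lam l) (Cpowz x (Z.of_nat l - 1))) L.

Lemma Cmod_bern_coef_le lam l B : Rabs (bernpoly l lam) <= B -> Cmod (bern_coef lam l) <= B.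
Proof.
  intros H. unfold bern_coef. rewrite Cmod_R. unfold Rdiv. rewrite Rabs_mult.
  assert (1 <= INR (fact l)) by (apply (le_INR 1), Factorial.lt_O_fact).
  rewrite (Rabs_pos_eq (/ _)) by (left; apply Rinv_0_lt_compat; lra).
  assert (/ INR (fact l) <= 1) by (rewrite <- Rinv_1; apply Rinv_le_contravar; lra).
  assert (0 < / INR (fact l)) by (apply Rinv_0_lt_compat; lra).
  pose proof (Rabs_pos (bernpoly l lam)). nra.
Qed.

Lemma bern_laurent_mult L lam x : x <> RtoC 0 ->
  Cmult (bern_laurent L lam x) x = sum_n (fun l => Cmult (bern_coef lam l) (Cpow x l)) L.
Proof.
  intros Hx. unfold bern_laurent. rewrite sum_n_C_mult_r. apply sum_n_ext. intros l.
  rewrite <- Cpowz_pred_mult by auto. toC; ring.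
Qed.

Lemma exp_taylor_poly_S_sub1 m x : Cminus (exp_taylor_poly (S m) x) (RtoC 1) =
  sum_n (fun j => Cmult (RtoC (/ INR (fact (S j)))) (Cpow x (S j))) m.
Proof.
  unfold exp_taylor_poly. rewrite sum_n_head. change (plus ?a ?b) with (Cplus a b).
  simpl fact. simpl Cpow. replace (/ INR 1) with 1 by (simpl; field). ring.
Qed.

(* The identity [(sum_l B_l(lam) x^l / l!) (e^x - 1) = x e^(lam x)] truncated at degree [L + 1]. *)
Lemma bern_cauchy_product L lam x :
  sum_n (fun l => Cmult (Cmult (bern_coef lam l) (Cpow x l))
                        (Cminus (exp_taylor_poly (S L - l) x) (RtoC 1))) L
  = Cmult x (exp_taylor_poly L (Cmult (RtoC lam) x)).
Proof.
  set (h := fun l j => Cmult (RtoC (bernpoly l lam / (INR (fact l) * INR (fact (S j)))))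
                             (Cpow x (S (l + j)))).
  rewrite (sum_n_ext_loc _ (fun l => sum_n (fun j => h l j) (L - l))).
  2:{ intros l Hl. replace (S L - l)%nat with (S (L - l)) by lia.
      rewrite exp_taylor_poly_S_sub1, sum_n_C_mult_l. apply sum_n_ext. intros j. unfold h, bern_coef.
      replace (S (l + j)) with (l + S j)%nat by lia. rewrite Cpow_add_r.
      replace (bernpoly l lam / (INR (fact l) * INR (fact (S j)))) with
        (bernpoly l lam / INR (fact l) * / INR (fact (S j)))
        by (pose proof (INR_fact_neq_0 l); pose proof (INR_fact_neq_0 (S j)); field; auto).
      rewrite RtoC_mult. toC; ring. }
  rewrite (sum_n_antidiagonal (G := C_AbelianMonoid) h).
  unfold exp_taylor_poly. rewrite sum_n_C_mult_l. apply sum_n_ext_loc. intros s Hs.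
  rewrite (sum_n_ext_loc _ (fun a => Cmult (RtoC (bernpoly a lam / (INR (fact a) * INR (fact (S s - a)))))
                                           (Cpow x (S s)))).
  2:{ intros a Ha. unfold h. replace (S (s - a)) with (S s - a)%nat by lia.
      now replace (S (a + (s - a))) with (S s) by lia. }
  rewrite <- sum_n_C_mult_r, <- RtoC_sum_n, bernpoly_fact_sum.
  rewrite Cpow_mult_l, <- RtoC_pow. unfold Rdiv. rewrite RtoC_mult, Cpow_S. toC; ring.
Qed.

Lemma div_pred_antimono a t : 1 < a -> a <= t -> t / (t - 1) <= a / (a - 1).
Proof.
  intros Ha Ht.
  replace (t / (t - 1)) with (a / (a - 1) + (a - t) / ((t - 1) * (a - 1))) by (field; lra).
  assert ((a - t) / ((t - 1) * (a - 1)) <= 0).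
  { unfold Rdiv. apply Rmult_le_0_r; [lra|]. left; apply Rinv_0_lt_compat. nra. }
  lra.
Qed.

Lemma Cmod_bern_gen_le c0 lam x : 0 < c0 -> 0 <= lam <= 1 -> c0 <= fst x ->
  Cmod (bern_gen lam x) <= exp c0 / (exp c0 - 1).
Proof.
  intros Hc0 Hlam Hx.
  assert (Hec : 1 < exp c0) by (pose proof (exp_ineq1 c0); lra).
  assert (Hex : exp c0 <= exp (fst x)) by now apply exp_le.
  assert (HD : exp (fst x) - 1 <= Cmod (Cminus (Cexp x) (RtoC 1))) by apply Cexp_sub1_ge.
  assert (HD0 : Cminus (Cexp x) (RtoC 1) <> RtoC 0)
    by (intro H; rewrite H, Cmod_R, Rabs_R0 in HD; lra).
  assert (Hl : exp (fst (Cmult (RtoC lam) x)) <= exp (fst x)) by (apply exp_le; simpl; nra).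
  unfold bern_gen. rewrite Cmod_div, Cmod_Cexp by auto.
  apply Rle_trans with (exp (fst x) / (exp (fst x) - 1)); [|apply div_pred_antimono; lra].
  unfold Rdiv. apply Rmult_le_compat; try lra.
  - left; apply exp_pos.
  - left; apply Rinv_0_lt_compat; lra.
  - apply Rinv_le_contravar; lra.
Qed.

Lemma Cmod_bern_laurent_le L lam x B : 1 <= Cmod x ->
  (forall l, (l <= L)%nat -> Rabs (bernpoly l lam) <= B) ->
  Cmod (bern_laurent L lam x) <= INR (S L) * B * Cmod x ^ L.
Proof.
  intros Hx HB. unfold bern_laurent. eapply Rle_trans; [apply Cmod_sum_n_le|].
  rewrite Rmult_assoc. apply sum_n_le_const. intros l Hl. rewrite Cmod_mult.
  apply Rmult_le_compat; auto using Cmod_ge_0, Cmod_bern_coef_le, Cmod_Cpowz_pred_le.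
Qed.

(* Multiplying by [x (e^x - 1)] turns the truncation error into a difference of two
   exponential Taylor remainders, by [bern_cauchy_product]. *)
Lemma bern_gen_sub_laurent_mult L lam x : x <> RtoC 0 -> Cminus (Cexp x) (RtoC 1) <> RtoC 0 ->
  Cmult (Cminus (bern_gen lam x) (bern_laurent L lam x)) (Cmult x (Cminus (Cexp x) (RtoC 1))) =
  Cminus (Cmult x (Cminus (Cexp (Cmult (RtoC lam) x)) (exp_taylor_poly L (Cmult (RtoC lam) x))))
         (sum_n (fun l => Cmult (Cmult (bern_coef lam l) (Cpow x l))
                                (Cminus (Cexp x) (exp_taylor_poly (S L - l) x))) L).
Proof.
  intros Hx HD.
  set (D := Cminus (Cexp x) (RtoC 1)) in *.
  transitivity (Cminus (Cmult x (Cexp (Cmult (RtoC lam) x)))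
                       (Cmult (Cmult (bern_laurent L lam x) x) D)).
  { unfold bern_gen. fold D. unfold Cdiv. field. auto. }
  rewrite bern_laurent_mult, sum_n_C_mult_r by auto.
  rewrite (sum_n_ext _ (fun l =>
     Cplus (Cmult (Cmult (bern_coef lam l) (Cpow x l)) (Cminus (Cexp x) (exp_taylor_poly (S L - l) x)))
           (Cmult (Cmult (bern_coef lam l) (Cpow x l)) (Cminus (exp_taylor_poly (S L - l) x) (RtoC 1)))))
    by (intros l; unfold D; toC; ring).
  rewrite (sum_n_plus (G := C_AbelianMonoid)), bern_cauchy_product.
  change (plus ?a ?b) with (Cplus a b). toC; ring.
Qed.

Lemma Cmod_mult_exp_taylor_rem_le L lam x : 0 <= lam <= 1 -> Cmod x <= 1 ->
  Cmod (Cmult x (Cminus (Cexp (Cmult (RtoC lam) x)) (exp_taylor_poly L (Cmult (RtoC lam) x))))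
    <= 6 * Cmod x ^ S (S L).
Proof.
  intros Hlam Hx1. pose proof (Cmod_ge_0 x).
  assert (Hlx : Cmod (Cmult (RtoC lam) x) <= Cmod x)
    by (rewrite Cmod_mult, Cmod_R, Rabs_pos_eq by lra; nra).
  pose proof (Cexp_taylor_rem L (Cmult (RtoC lam) x) ltac:(lra)).
  assert (Cmod (Cmult (RtoC lam) x) ^ S L <= Cmod x ^ S L)
    by (apply pow_incr; split; auto using Cmod_ge_0).
  rewrite Cmod_mult. change (Cmod x ^ S (S L)) with (Cmod x * Cmod x ^ S L).
  apply Rle_trans with (Cmod x * (6 * Cmod (Cmult (RtoC lam) x) ^ S L));
    [apply Rmult_le_compat_l|]; nra.
Qed.

Lemma Cmod_sum_bern_taylor_rem_le L lam x B : Cmod x <= 1 ->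
  (forall l, (l <= L)%nat -> Rabs (bernpoly l lam) <= B) ->
  Cmod (sum_n (fun l => Cmult (Cmult (bern_coef lam l) (Cpow x l))
                              (Cminus (Cexp x) (exp_taylor_poly (S L - l) x))) L)
    <= INR (S L) * B * 6 * Cmod x ^ S (S L).
Proof.
  intros Hx1 HB. eapply Rle_trans; [apply Cmod_sum_n_le|]. rewrite !Rmult_assoc.
  apply sum_n_le_const. intros l Hl. rewrite !Cmod_mult, Cmod_pow.
  pose proof (Cexp_taylor_rem (S L - l) x Hx1).
  pose proof (Cmod_bern_coef_le lam l B (HB l Hl)).
  pose proof (Cmod_ge_0 (bern_coef lam l)). pose proof (pow_le _ l (Cmod_ge_0 x)).
  pose proof (Cmod_ge_0 (Cminus (Cexp x) (exp_taylor_poly (S L - l) x))).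
  replace (Cmod x ^ S (S L)) with (Cmod x ^ l * Cmod x ^ S (S L - l))
    by (rewrite <- pow_add; f_equal; lia).
  apply Rle_trans with (B * Cmod x ^ l * (6 * Cmod x ^ S (S L - l))); [|lra].
  apply Rmult_le_compat; auto using Rmult_le_pos. apply Rmult_le_compat; lra.
Qed.

Lemma Cmod_bern_gen_sub_laurent_small L c0 lam x B : 0 < c0 -> 0 <= lam <= 1 ->
  (forall l, (l <= L)%nat -> Rabs (bernpoly l lam) <= B) ->
  x <> RtoC 0 -> Cmod x < 1 -> c0 * Cmod x <= fst x ->
  Cmod (Cminus (bern_gen lam x) (bern_laurent L lam x))
    <= 6 * (INR (S L) * B + 1) / c0 * Cmod x ^ L.
Proof.
  intros Hc0 Hlam HB Hx0 Hx1 Hsec.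
  assert (Hx : 0 < Cmod x) by now apply Cmod_gt_0.
  assert (HD : fst x <= Cmod (Cminus (Cexp x) (RtoC 1))) by apply Re_le_Cexp_sub1.
  assert (HD0 : Cminus (Cexp x) (RtoC 1) <> RtoC 0)
    by (intro H; rewrite H, Cmod_R, Rabs_R0 in HD; nra).
  pose proof (Cmod_mult_exp_taylor_rem_le L lam x Hlam ltac:(lra)) as H1.
  pose proof (Cmod_sum_bern_taylor_rem_le L lam x B ltac:(lra) HB) as H2.
  pose proof (Cmod_triangle
    (Cmult x (Cminus (Cexp (Cmult (RtoC lam) x)) (exp_taylor_poly L (Cmult (RtoC lam) x))))
    (Copp (sum_n (fun l => Cmult (Cmult (bern_coef lam l) (Cpow x l))
                                 (Cminus (Cexp x) (exp_taylor_poly (S L - l) x))) L))) as Htri.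
  rewrite Cmod_opp in Htri. change (Cplus ?a (Copp ?b)) with (Cminus a b) in Htri.
  rewrite <- bern_gen_sub_laurent_mult in Htri by auto.
  rewrite (Cmod_mult _ (Cmult x _)), Cmod_mult in Htri.
  set (F := Cmod (Cminus (bern_gen lam x) (bern_laurent L lam x))) in *.
  assert (HF : 0 <= F) by apply Cmod_ge_0.
  assert (HxL : 0 <= Cmod x ^ L) by (apply pow_le; lra).
  replace (Cmod x ^ S (S L)) with (Cmod x ^ 2 * Cmod x ^ L) in H1, H2 by (simpl; ring).
  assert (Hkey : F * (c0 * Cmod x ^ 2) <= 6 * (INR (S L) * B + 1) * Cmod x ^ 2 * Cmod x ^ L).
  { apply Rle_trans with (F * (Cmod x * Cmod (Cminus (Cexp x) (RtoC 1)))); [|nra].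
    apply Rmult_le_compat_l; auto. simpl. nra. }
  apply (Rmult_le_reg_r (c0 * Cmod x ^ 2)); [apply Rmult_lt_0_compat; auto; apply pow_lt; auto|].
  replace (6 * (INR (S L) * B + 1) / c0 * Cmod x ^ L * (c0 * Cmod x ^ 2))
    with (6 * (INR (S L) * B + 1) * Cmod x ^ 2 * Cmod x ^ L) by (field; lra).
  exact Hkey.
Qed.

(* Uniform truncation bound for the generating function on the sector [Re x >= c0 |x|]:
   for [|x| >= 1] both terms are [O(|x|^L)], for [|x| < 1] the difference is. *)
Lemma bern_gen_sub_laurent_bound L c0 B : 0 < c0 -> 0 <= B -> exists K, forall lam x,
  0 <= lam <= 1 -> (forall l, (l <= L)%nat -> Rabs (bernpoly l lam) <= B) ->
  0 < fst x -> c0 * Cmod x <= fst x ->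
  Cmod (Cminus (bern_gen lam x) (bern_laurent L lam x)) <= K * Cmod x ^ L.
Proof.
  intros Hc0 HB0.
  set (G := exp c0 / (exp c0 - 1)).
  set (A := 6 * (INR (S L) * B + 1) / c0).
  assert (Hec : 1 < exp c0) by (pose proof (exp_ineq1 c0); lra).
  assert (HG : 0 < G) by (apply Rdiv_lt_0_compat; lra).
  assert (HA1 : 0 <= INR (S L) * B) by (apply Rmult_le_pos; auto using pos_INR).
  assert (HA : 0 <= A) by (apply Rdiv_le_0_compat; lra).
  exists (G + INR (S L) * B + A). intros lam x Hlam HB Hx Hsec.
  assert (Hx0 : x <> RtoC 0) by (intro H; rewrite H in Hx; simpl in Hx; lra).
  pose proof (Cmod_ge_0 x) as Hxn.
  destruct (Rle_or_lt 1 (Cmod x)) as [Hbig|Hsmall].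
  - assert (HxL : 1 <= Cmod x ^ L) by now apply pow_R1_Rle.
    assert (HQ : Cmod (bern_gen lam x) <= G) by (apply Cmod_bern_gen_le; auto; nra).
    pose proof (Cmod_bern_laurent_le L lam x B Hbig HB).
    pose proof (Cmod_triangle (bern_gen lam x) (Copp (bern_laurent L lam x))) as Htri.
    rewrite Cmod_opp in Htri. change (Cplus ?a (Copp ?b)) with (Cminus a b) in Htri.
    assert (0 <= A * Cmod x ^ L) by (apply Rmult_le_pos; lra).
    nra.
  - pose proof (Cmod_bern_gen_sub_laurent_small L c0 lam x B Hc0 Hlam HB Hx0 Hsmall Hsec).
    assert (HxL : 0 <= Cmod x ^ L) by (apply pow_le; lra).
    fold A in H. nra.
Qed.

Lemma Cpartial_S (f : nat -> C) n : Cpartial f (S n) = sum_n f n.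
Proof.
  induction n as [|n IH].
  - rewrite sum_O. change (Cplus (RtoC 0) (f 0%nat) = f 0%nat). toC; ring.
  - change (Cpartial f (S (S n))) with (Cadd (Cpartial f (S n)) (f (S n))).
    now rewrite IH, sum_Sn.
Qed.

Lemma is_series_has_sum (f : nat -> C) s : is_series f s -> has_sum f s.
Proof.
  intros H eps Heps.
  assert (Hnf := @norm_factor_gt_0 C_AbsRing C_NormedModule).
  assert (Hp : 0 < eps / @norm_factor C_AbsRing C_NormedModule) by (apply Rdiv_lt_0_compat; auto).
  destruct (proj1 (filterlim_locally (sum_n f) s) H (mkposreal _ Hp)) as [N HN].
  exists (S N). intros [|n] Hn; [lia|].
  rewrite Cpartial_S. unfold R_dist. rewrite Rminus_0_r, Rabs_pos_eq by apply Cmod_ge_0.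
  specialize (HN n ltac:(lia)). apply (@norm_compat2 C_AbsRing C_NormedModule) in HN. simpl in HN.
  change (norm (minus (sum_n f n) s)) with (Cmod (Cminus (sum_n f n) s)) in HN.
  replace (norm_factor * (eps / norm_factor)) with eps in HN by (field; lra).
  exact HN.
Qed.

Lemma has_sum_is_series (f : nat -> C) s : has_sum f s -> is_series f s.
Proof.
  intros H. apply (proj2 (filterlim_locally _ _)). intros eps.
  destruct (H eps (cond_pos eps)) as [N HN]. exists N. intros n Hn.
  apply (@norm_compat1 C_AbsRing C_NormedModule). specialize (HN (S n) ltac:(lia)).
  rewrite Cpartial_S in HN. unfold R_dist in HN.
  rewrite Rminus_0_r, Rabs_pos_eq in HN by apply Cmod_ge_0. exact HN.
Qed.

Lemma Csum_is_series (f : nat -> C) s : is_series f s -> Csum f = s.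
Proof.
  intros H.
  assert (Hh : has_sum f (Csum f))
    by (unfold Csum; apply epsilon_spec; exists s; now apply is_series_has_sum).
  exact (filterlim_locally_unique _ _ _ (has_sum_is_series _ _ Hh) H).
Qed.

Lemma ex_series_Csum (f : nat -> C) : ex_series f -> is_series f (Csum f).
Proof. intros [s Hs]. now rewrite (Csum_is_series f s Hs). Qed.

Lemma is_series_sum_n (G : nat -> nat -> C) (S : nat -> C) L :
  (forall l, (l <= L)%nat -> is_series (G l) (S l)) ->
  is_series (fun i => sum_n (fun l => G l i) L) (sum_n S L).
Proof.
  induction L as [|L IH]; intros H.
  - rewrite sum_O. apply (is_series_ext (G 0%nat)); [intros; now rewrite sum_O | apply H; lia].
  - rewrite sum_Sn.
    apply (is_series_ext (fun i => Cplus (sum_n (fun l => G l i) L) (G (Datatypes.S L) i)));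
      [intros; now rewrite sum_Sn|].
    apply (@is_series_plus C_AbsRing C_NormedModule); [apply IH; intros; apply H | apply H]; lia.
Qed.

Lemma Cmod_series_le (f : nat -> C) s B :
  is_series f s -> (forall n, Cmod (sum_n f n) <= B) -> Cmod s <= B.
Proof.
  intros Hs HB.
  assert (Hlim : is_lim_seq (fun n => Cmod (sum_n f n)) (Cmod s))
    by exact (filterlim_comp _ _ _ _ _ _ _ _ Hs (@filterlim_norm C_AbsRing C_NormedModule s)).
  exact (is_lim_seq_le _ _ _ _ HB Hlim (is_lim_seq_const B)).
Qed.

Lemma exp_pow_INR a n : exp a ^ n = exp (INR n * a).
Proof.
  induction n as [|n IH]; [simpl; now rewrite Rmult_0_l, exp_0|].
  rewrite S_INR. simpl. rewrite IH, <- exp_plus. f_equal. ring.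
Qed.

Lemma pow_le_exp_mult p d : 0 < d -> exists A, 0 <= A /\ forall t, 0 <= t -> t ^ p <= A * exp (d * t).
Proof.
  intros Hd. set (q := INR (S p)). assert (Hq : 0 < q) by (apply lt_0_INR; lia).
  assert (Hdq : 0 < d / q) by (apply Rdiv_lt_0_compat; auto).
  exists (/ (d / q) ^ p). split; [left; apply Rinv_0_lt_compat, pow_lt; auto|].
  intros t Ht. set (s := d / q * t).
  assert (Hs : 0 <= s) by (apply Rmult_le_pos; lra).
  assert (H1 : s ^ p <= exp (INR p * s)).
  { rewrite <- exp_pow_INR. apply pow_incr. pose proof (exp_ineq1_le s). lra. }
  assert (H2 : exp (INR p * s) <= exp (d * t)).
  { apply exp_le. unfold s.
    assert (INR p <= q) by (apply le_INR; lia).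
    replace (INR p * (d / q * t)) with ((INR p / q) * (d * t)) by (field; lra).
    assert (INR p / q <= 1) by (apply (Rmult_le_reg_r q); auto; field_simplify; lra).
    assert (0 <= INR p / q) by (apply Rdiv_le_0_compat; auto using pos_INR).
    assert (0 <= d * t) by nra. nra. }
  replace (t ^ p) with (/ (d / q) ^ p * s ^ p)
    by (unfold s; rewrite Rpow_mult_distr; field; apply pow_nonzero; lra).
  apply Rmult_le_compat_l; [left; apply Rinv_0_lt_compat, pow_lt; auto | lra].
Qed.

Lemma pow_mult_geom_le p d : 0 < d ->
  exists A, 0 <= A /\ forall r : nat, INR r ^ p * exp (- d) ^ r <= A * exp (- d / 2) ^ r.
Proof.
  intros Hd. destruct (pow_le_exp_mult p (d / 2) ltac:(lra)) as [A [HA H]].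
  exists A. split; auto. intros r. rewrite !exp_pow_INR.
  apply Rle_trans with (A * exp (d / 2 * INR r) * exp (INR r * - d)).
  - apply Rmult_le_compat_r; [left; apply exp_pos | apply H, pos_INR].
  - rewrite Rmult_assoc, <- exp_plus. right. do 2 f_equal. field.
Qed.

Lemma ex_series_geom_S c q : 0 <= q < 1 -> ex_series (fun n => c * q ^ S n).
Proof.
  intros Hq. apply (ex_series_ext (fun n => scal (c * q) (q ^ n))).
  { intros n. change (c * q * q ^ n = c * q ^ S n). simpl. ring. }
  apply (@ex_series_scal_l R_AbsRing R_NormedModule), ex_series_geom.
  rewrite Rabs_pos_eq; lra.
Qed.

Lemma sum_n_geom_S_le c q n : 0 <= c -> 0 <= q < 1 -> sum_n (fun i => c * q ^ S i) n <= c / (1 - q).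
Proof.
  intros Hc Hq.
  rewrite (sum_n_ext _ (fun i => (c * q) * q ^ i)) by (intros; simpl; ring).
  rewrite <- sum_n_R_mult_l, sum_n_Reals, tech3 by lra.
  pose proof (pow_le q (S n) (proj1 Hq)).
  assert (0 < / (1 - q)) by (apply Rinv_0_lt_compat; lra).
  unfold Rdiv. apply Rle_trans with (c * q * / (1 - q)).
  - apply Rmult_le_compat_l; [apply Rmult_le_pos; lra|].
    rewrite <- (Rmult_1_l (/ (1 - q))) at 2. apply Rmult_le_compat_r; lra.
  - apply Rmult_le_compat_r; nra.
Qed.

Lemma pow_eq_1_nonneg t k : 0 <= t -> (1 <= k)%nat -> t ^ k = 1 -> t = 1.
Proof.
  intros Ht Hk H. destruct k as [|k]; [lia|].
  destruct (Rtotal_order t 1) as [Hl|[He|Hg]]; auto; exfalso.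
  - assert (forall n, t ^ S n < 1) by (induction n; simpl in *; nra).
    specialize (H0 k). lra.
  - assert (forall n, 1 < t ^ S n) by (induction n; simpl in *; nra).
    specialize (H0 k). lra.
Qed.

Lemma Cmod_primitive_root k rho : (1 <= k)%nat -> primitive_root k rho -> Cmod rho = 1.
Proof.
  intros Hk [H _]. rewrite Defs_Cpow_eq in H. apply (f_equal Cmod) in H.
  rewrite Cmod_pow in H. change C1 with (RtoC 1) in H. rewrite Cmod_R, Rabs_R1 in H.
  apply (pow_eq_1_nonneg _ k); auto using Cmod_ge_0.
Qed.

Lemma Rabs_bounded_le (f : nat -> R) n : exists B, 0 <= B /\ forall i, (i <= n)%nat -> Rabs (f i) <= B.
Proof.
  induction n as [|n [B [HB H]]].
  - exists (Rabs (f 0%nat)). split; [apply Rabs_pos|]. intros i Hi. now replace i with 0%nat by lia.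
  - exists (Rmax B (Rabs (f (S n)))). split; [eapply Rle_trans; [exact HB | apply Rmax_l]|].
    intros i Hi. destruct (Nat.eq_dec i (S n)) as [->|]; [apply Rmax_r|].
    eapply Rle_trans; [apply H; lia | apply Rmax_l].
Qed.

Lemma Rabs_bounded2_le (f : nat -> nat -> R) n m :
  exists B, 0 <= B /\ forall i j, (i <= n)%nat -> (j <= m)%nat -> Rabs (f i j) <= B.
Proof.
  induction n as [|n [B [HB H]]].
  - destruct (Rabs_bounded_le (f 0%nat) m) as [B [HB H]]. exists B. split; auto.
    intros i j Hi Hj. replace i with 0%nat by lia. auto.
  - destruct (Rabs_bounded_le (f (S n)) m) as [B' [HB' H']].
    exists (Rmax B B'). split; [eapply Rle_trans; [exact HB | apply Rmax_l]|].
    intros i j Hi Hj. destruct (Nat.eq_dec i (S n)) as [->|].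
    + eapply Rle_trans; [apply H'; auto | apply Rmax_r].
    + eapply Rle_trans; [apply H; auto; lia | apply Rmax_l].
Qed.

Lemma Cpowz_mult a b n : a <> RtoC 0 -> b <> RtoC 0 ->
  Cpowz (Cmult a b) n = Cmult (Cpowz a n) (Cpowz b n).
Proof.
  intros Ha Hb. destruct n as [|p|p]; simpl.
  - change C1 with (RtoC 1). toC; ring.
  - rewrite !Defs_Cpow_eq. apply Cpow_mult_l.
  - rewrite !Defs_Cpow_eq.
    change (Cinv (Cpow (Cmult a b) (Pos.to_nat p))
            = Cmult (Cinv (Cpow a (Pos.to_nat p))) (Cinv (Cpow b (Pos.to_nat p)))).
    rewrite Cpow_mult_l. field. split; now apply Cpow_nz.
Qed.

Lemma Cpowz_RtoC t n : t <> 0 -> Cpowz (RtoC t) n = RtoC (powerRZ t n).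
Proof.
  intros Ht. destruct n as [|p|p]; simpl; [reflexivity| |].
  - now rewrite Defs_Cpow_eq, <- RtoC_pow.
  - rewrite Defs_Cpow_eq, <- RtoC_pow.
    change (Cinv (RtoC (t ^ Pos.to_nat p)) = RtoC (/ t ^ Pos.to_nat p)).
    rewrite RtoC_inv; [reflexivity | now apply pow_nonzero].
Qed.

Lemma powerRZ_polylog_exponent (r : R) (l : nat) : r <> 0 ->
  (-1) ^ l * powerRZ r (- (2 - Z.of_nat l)) = - / r * powerRZ (- r) (Z.of_nat l - 1).
Proof.
  intros Hr.
  replace (- (2 - Z.of_nat l))%Z with ((Z.of_nat l - 1) + (-1))%Z by lia.
  rewrite powerRZ_add by auto.
  replace (- r) with ((-1) * r) by ring. rewrite powerRZ_mult, pow_powerRZ.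
  replace (Z.of_nat l) with ((Z.of_nat l - 1) + 1)%Z at 1 by lia.
  rewrite powerRZ_add by lra. simpl. field. auto.
Qed.

Definition chi_term (k : nat) (rho : C) (a : nat) (w : C) (N : nat) (i : nat) : C :=
  Cdiv (Cmult (Cmult (Cpow (Cinv rho) (S i * a)) (RtoC (/ INR (S i))))
              (Cmult (Cexp (Cmult (RtoC (- INR (S i))) w))
                     (Cexp (Cmult (RtoC (INR (S i) * INR a / INR N)) w))))
       (Cminus (Cexp (Cmult (RtoC (INR k * INR (S i) / INR N)) w)) (RtoC 1)).

Lemma chi_Csum k rho a w N : chi k rho a w N = Csum (chi_term k rho a w N).
Proof. reflexivity. Qed.

Definition polylog_term (l : nat) (u : C) (i : nat) : C :=
  Cmult (Cpow u (S i)) (RtoC (powerRZ (INR (S i)) (- (2 - Z.of_nat l)))).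

Definition expansion_coef (k a : nat) (z : C) (N l : nat) : C :=
  Cmult (RtoC ((-1) ^ l / INR (fact l) * bernpoly l (INR a / INR k)))
        (Cpowz (Cmult (RtoC (INR k / INR N)) z) (Z.of_nat l - 1)).

Lemma chi_expansion_sum_n k rho a z N L : chi_expansion k rho a z N L =
  sum_n (fun l => Cmult (expansion_coef k a z N l)
                        (Csum (polylog_term l (Cmult (Cpow (Cinv rho) a) (Cexp z))))) L.
Proof. unfold chi_expansion. now rewrite Cpartial_S. Qed.

(* [x_r = k r (-z) / N], the point at which the [r]-th term of [chi] samples [bern_gen]. *)
Definition sample_point (k N : nat) (z : C) (r : R) : C :=
  Cmult (RtoC (INR k * r / INR N)) (Copp z).

Definition chi_error_term (k N L a : nat) (rho z : C) (i : nat) : C :=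
  Cmult (Cmult (Cpow (Cmult (Cpow (Cinv rho) a) (Cexp z)) (S i)) (RtoC (/ INR (S i))))
        (Cminus (bern_gen (INR a / INR k) (sample_point k N z (INR (S i))))
                (bern_laurent L (INR a / INR k) (sample_point k N z (INR (S i))))).

Lemma chi_term_eq k rho a z N i : (1 <= k)%nat -> (1 <= N)%nat ->
  chi_term k rho a (Copp z) N i =
  Cmult (Cmult (Cpow (Cmult (Cpow (Cinv rho) a) (Cexp z)) (S i)) (RtoC (/ INR (S i))))
        (bern_gen (INR a / INR k) (sample_point k N z (INR (S i)))).
Proof.
  intros Hk HN.
  assert (INR k <> 0) by (apply not_0_INR; lia). assert (INR N <> 0) by (apply not_0_INR; lia).
  unfold chi_term, bern_gen, sample_point.
  rewrite Nat.mul_comm, Cpow_mult_r.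
  replace (Cmult (RtoC (- INR (S i))) (Copp z)) with (Cmult (RtoC (INR (S i))) z)
    by (rewrite RtoC_opp; toC; ring).
  rewrite Cexp_INR_mult.
  replace (Cmult (RtoC (INR a / INR k)) (Cmult (RtoC (INR k * INR (S i) / INR N)) (Copp z)))
    with (Cmult (RtoC (INR (S i) * INR a / INR N)) (Copp z))
    by (rewrite Cmult_assoc, <- RtoC_mult; do 2 f_equal; field; auto).
  unfold Cdiv. rewrite Cpow_mult_l. toC; ring.
Qed.

Lemma expansion_term_eq k a z N l (u : C) r : (1 <= k)%nat -> (1 <= N)%nat -> z <> RtoC 0 ->
  r <> 0 ->
  Cmult (expansion_coef k a z N l)
        (Cmult u (RtoC (powerRZ r (- (2 - Z.of_nat l)))))
  = Copp (Cmult (Cmult u (RtoC (/ r)))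
                (Cmult (bern_coef (INR a / INR k) l)
                       (Cpowz (sample_point k N z r) (Z.of_nat l - 1)))).
Proof.
  intros Hk HN Hz Hr.
  assert (HkR : INR k <> 0) by (apply not_0_INR; lia).
  assert (HNR : INR N <> 0) by (apply not_0_INR; lia).
  set (y := Cmult (RtoC (INR k / INR N)) z).
  assert (Hy : y <> RtoC 0).
  { apply Cmult_neq_0; auto. intro H. apply RtoC_inj in H.
    apply (Rmult_integral_contrapositive_currified (INR k) (/ INR N)); auto using Rinv_neq_0_compat. }
  assert (Hx : sample_point k N z r = Cmult (RtoC (- r)) y).
  { unfold sample_point, y. rewrite Cmult_assoc, <- RtoC_mult.
    replace (- r * (INR k / INR N)) with (- (INR k * r / INR N)) by (field; auto).
    rewrite RtoC_opp. toC; ring. }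
  rewrite Hx. unfold expansion_coef, bern_coef. fold y.
  assert (Hr' : RtoC (- r) <> RtoC 0) by (intro H; apply RtoC_inj in H; lra).
  rewrite Cpowz_mult, Cpowz_RtoC by (auto; lra).
  set (B := bernpoly l (INR a / INR k)). set (Y := Cpowz y (Z.of_nat l - 1)).
  pose proof (powerRZ_polylog_exponent r l Hr) as Hexp. pose proof (INR_fact_neq_0 l).
  transitivity (Cmult (RtoC ((-1) ^ l / INR (fact l) * B * powerRZ r (- (2 - Z.of_nat l))))
                      (Cmult Y u)).
  { rewrite !RtoC_mult. toC; ring. }
  transitivity (Cmult (RtoC (- (/ r * (B / INR (fact l)) * powerRZ (- r) (Z.of_nat l - 1))))
                      (Cmult Y u)).
  { do 2 f_equal.
    replace ((-1) ^ l / INR (fact l) * B * powerRZ r (- (2 - Z.of_nat l)))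
      with (((-1) ^ l * powerRZ r (- (2 - Z.of_nat l))) * (B / INR (fact l))) by (field; auto).
    rewrite Hexp. ring. }
  rewrite RtoC_opp, !RtoC_mult. toC; ring.
Qed.

(* Summed over [r], this identity is the expansion: the Laurent part of [bern_gen] at [x_r]
   reproduces the polylogarithm terms. *)
Lemma chi_term_decomp k rho a z N L i : (1 <= k)%nat -> (1 <= N)%nat -> z <> RtoC 0 ->
  chi_term k rho a (Copp z) N i =
  Cminus (chi_error_term k N L a rho z i)
         (sum_n (fun l => Cmult (expansion_coef k a z N l)
                                (polylog_term l (Cmult (Cpow (Cinv rho) a) (Cexp z)) i)) L).
Proof.
  intros Hk HN Hz. rewrite chi_term_eq by auto.
  set (U := Cpow (Cmult (Cpow (Cinv rho) a) (Cexp z)) (S i)).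
  rewrite (sum_n_ext _ (fun l => Copp (Cmult (Cmult U (RtoC (/ INR (S i))))
     (Cmult (bern_coef (INR a / INR k) l)
            (Cpowz (sample_point k N z (INR (S i))) (Z.of_nat l - 1)))))).
  2:{ intros l. apply expansion_term_eq; auto. apply not_0_INR; lia. }
  rewrite (sum_n_ext _ (fun l => Cmult (RtoC (-1)) (Cmult (Cmult U (RtoC (/ INR (S i))))
     (Cmult (bern_coef (INR a / INR k) l)
            (Cpowz (sample_point k N z (INR (S i))) (Z.of_nat l - 1))))))
    by (intros; toC; ring).
  rewrite <- sum_n_C_mult_l, <- sum_n_C_mult_l.
  unfold chi_error_term, bern_laurent. fold U. toC; ring.
Qed.

Lemma is_series_geom_dominated (f : nat -> C) c q : 0 <= c -> 0 <= q < 1 ->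
  (forall n, Cmod (f n) <= c * q ^ S n) ->
  is_series f (Csum f) /\ Cmod (Csum f) <= c / (1 - q).
Proof.
  intros Hc Hq Hf.
  assert (Hs : is_series f (Csum f)).
  { apply ex_series_Csum, (@ex_series_le C_AbsRing C_CompleteNormedModule f (fun n => c * q ^ S n));
      [exact Hf | now apply ex_series_geom_S]. }
  split; [exact Hs|]. apply (Cmod_series_le f); [exact Hs|]. intros n.
  eapply Rle_trans; [apply Cmod_sum_n_le|].
  eapply Rle_trans; [apply sum_n_m_le; exact Hf | now apply sum_n_geom_S_le].
Qed.

Lemma Rabs_powerRZ_polylog_le r l L : 1 <= r -> (l <= L)%nat ->
  Rabs (powerRZ r (- (2 - Z.of_nat l))) <= r ^ L.
Proof.
  intros Hr Hl. rewrite Rabs_pos_eq by (apply powerRZ_le; lra).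
  assert (HrL : 1 <= r ^ L) by now apply pow_R1_Rle.
  destruct l as [|[|m]].
  - simpl. apply Rle_trans with 1; [|lra]. rewrite <- Rinv_1. apply Rinv_le_contravar; nra.
  - simpl. apply Rle_trans with 1; [|lra]. rewrite <- Rinv_1. apply Rinv_le_contravar; lra.
  - replace (- (2 - Z.of_nat (S (S m))))%Z with (Z.of_nat m) by lia.
    rewrite <- pow_powerRZ. apply Rle_pow; auto. lia.
Qed.

Lemma Cmod_polylog_term_le l L u d i : (l <= L)%nat -> Cmod u <= exp (- d) ->
  Cmod (polylog_term l u i) <= INR (S i) ^ L * exp (- d) ^ S i.
Proof.
  intros Hl Hu. unfold polylog_term. rewrite Cmod_mult, Cmod_pow, Cmod_R, Rmult_comm.
  assert (Hr : 1 <= INR (S i)) by (rewrite S_INR; pose proof (pos_INR i); lra).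
  apply Rmult_le_compat; auto using Rabs_pos, pow_le, Cmod_ge_0, Rabs_powerRZ_polylog_le.
  apply pow_incr. auto using Cmod_ge_0.
Qed.

Section SamplePoint.

Variables (k N : nat) (delta Cb : R) (z : C).
Hypotheses (Hk : (1 <= k)%nat) (HN : (1 <= N)%nat) (Hdelta : 0 < delta) (HCb : 0 < Cb)
  (Hz : fst z <= - delta) (HzCb : Cmod z <= Cb).

Lemma Cmod_sample_point r : 0 <= r -> Cmod (sample_point k N z r) = INR k * r / INR N * Cmod z.
Proof.
  intros Hr. unfold sample_point. rewrite Cmod_mult, Cmod_R, Cmod_opp, Rabs_pos_eq; [reflexivity|].
  apply Rdiv_le_0_compat; [apply Rmult_le_pos; auto using pos_INR | apply lt_0_INR; lia].
Qed.

Lemma sample_point_in_sector r : 0 < r ->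
  0 < fst (sample_point k N z r) /\
  delta / Cb * Cmod (sample_point k N z r) <= fst (sample_point k N z r).
Proof.
  intros Hr.
  assert (Hs : 0 < INR k * r / INR N)
    by (apply Rdiv_lt_0_compat; [apply Rmult_lt_0_compat; auto; apply lt_0_INR |
                                 apply lt_0_INR]; lia).
  assert (Hre : fst (sample_point k N z r) = INR k * r / INR N * (- fst z)) by (simpl; ring).
  rewrite Cmod_sample_point, Hre by lra. split; [nra|].
  assert (Cmod z / Cb <= 1)
    by (apply (Rmult_le_reg_r Cb); auto; unfold Rdiv; rewrite Rmult_assoc, Rinv_l; lra).
  assert (0 <= Cmod z / Cb) by (apply Rdiv_le_0_compat; auto using Cmod_ge_0).
  replace (delta / Cb * (INR k * r / INR N * Cmod z))
    with (INR k * r / INR N * (delta * (Cmod z / Cb)))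
    by (field; split; [apply not_0_INR; lia | lra]).
  apply Rmult_le_compat_l; nra.
Qed.

Lemma Cmod_chi_error_term_le L a rho K i :
  (forall x, 0 < fst x -> delta / Cb * Cmod x <= fst x ->
     Cmod (Cminus (bern_gen (INR a / INR k) x) (bern_laurent L (INR a / INR k) x)) <= K * Cmod x ^ L) ->
  Cmod (Cmult (Cpow (Cinv rho) a) (Cexp z)) <= exp (- delta) ->
  Cmod (chi_error_term k N L a rho z i)
    <= Rabs K * (INR k * Cb / INR N) ^ L * (INR (S i) ^ L * exp (- delta) ^ S i).
Proof.
  intros HK Hu. set (r := INR (S i)).
  assert (Hr : 1 <= r) by (unfold r; rewrite S_INR; pose proof (pos_INR i); lra).
  destruct (sample_point_in_sector r ltac:(lra)) as [Hre Hsec].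
  pose proof (HK _ Hre Hsec) as Hrem.
  assert (HxL : Cmod (sample_point k N z r) ^ L <= (INR k * Cb / INR N) ^ L * r ^ L).
  { rewrite Cmod_sample_point, <- Rpow_mult_distr by lra.
    assert (0 <= INR k * r / INR N)
      by (apply Rdiv_le_0_compat; [apply Rmult_le_pos; auto using pos_INR; lra | apply lt_0_INR; lia]).
    apply pow_incr. split; [apply Rmult_le_pos; auto using Cmod_ge_0|].
    replace (INR k * Cb / INR N * r) with (INR k * r / INR N * Cb) by (field; apply not_0_INR; lia).
    apply Rmult_le_compat_l; lra. }
  unfold chi_error_term. fold r.
  rewrite !Cmod_mult, Cmod_pow, Cmod_R, Rabs_pos_eq by (left; apply Rinv_0_lt_compat; lra).
  assert (Hinv : / r <= 1) by (rewrite <- Rinv_1; apply Rinv_le_contravar; lra).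
  assert (HuS : Cmod (Cmult (Cpow (Cinv rho) a) (Cexp z)) ^ S i <= exp (- delta) ^ S i)
    by (apply pow_incr; auto using Cmod_ge_0).
  assert (HE : Cmod (Cminus (bern_gen (INR a / INR k) (sample_point k N z r))
                            (bern_laurent L (INR a / INR k) (sample_point k N z r)))
               <= Rabs K * ((INR k * Cb / INR N) ^ L * r ^ L)).
  { apply Rle_trans with (Rabs K * Cmod (sample_point k N z r) ^ L).
    - eapply Rle_trans; [exact Hrem|].
      apply Rmult_le_compat_r; [apply pow_le, Cmod_ge_0 | apply Rle_abs].
    - apply Rmult_le_compat_l; [apply Rabs_pos | exact HxL]. }
  pose proof (pow_le _ (S i) (Cmod_ge_0 (Cmult (Cpow (Cinv rho) a) (Cexp z)))).
  pose proof (Cmod_ge_0 (Cminus (bern_gen (INR a / INR k) (sample_point k N z r))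
                                (bern_laurent L (INR a / INR k) (sample_point k N z r)))).
  assert (0 < / r) by (apply Rinv_0_lt_compat; lra).
  apply Rle_trans with (exp (- delta) ^ S i * 1 * (Rabs K * ((INR k * Cb / INR N) ^ L * r ^ L))).
  - apply Rmult_le_compat; auto.
    + apply Rmult_le_pos; lra.
    + apply Rmult_le_compat; lra.
  - right. ring.
Qed.

End SamplePoint.

Lemma exp_neg_half_range d : 0 < d -> 0 <= exp (- d / 2) < 1.
Proof. intros Hd. split; [left; apply exp_pos | rewrite <- exp_0; apply exp_increasing; lra]. Qed.

Lemma Cmod_twist_le k rho a z delta : (1 <= k)%nat -> primitive_root k rho -> fst z <= - delta ->
  Cmod (Cmult (Cpow (Cinv rho) a) (Cexp z)) <= exp (- delta).
Proof.
  intros Hk Hrho Hz. pose proof (Cmod_primitive_root k rho Hk Hrho) as H1.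
  rewrite Cmod_mult, Cmod_pow, Cmod_inv, H1, Rinv_1, pow1, Rmult_1_l, Cmod_Cexp
    by (intro H; rewrite H, Cmod_R, Rabs_R0 in H1; lra).
  now apply exp_le.
Qed.

Lemma is_series_polylog_term l L u delta : 0 < delta -> (l <= L)%nat -> Cmod u <= exp (- delta) ->
  is_series (polylog_term l u) (Csum (polylog_term l u)).
Proof.
  intros Hdelta Hl Hu. destruct (pow_mult_geom_le L delta Hdelta) as [A [HA HAq]].
  apply (is_series_geom_dominated _ A _ HA (exp_neg_half_range delta Hdelta)). intros i.
  eapply Rle_trans; [apply (Cmod_polylog_term_le l L u delta i Hl Hu) | apply HAq].
Qed.

Lemma is_series_chi_term k rho a z N L delta : (1 <= k)%nat -> (1 <= N)%nat -> 0 < delta ->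
  primitive_root k rho -> fst z <= - delta ->
  is_series (chi_error_term k N L a rho z) (Csum (chi_error_term k N L a rho z)) ->
  is_series (chi_term k rho a (Copp z) N)
            (Cminus (Csum (chi_error_term k N L a rho z)) (chi_expansion k rho a z N L)).
Proof.
  intros Hk HN Hdelta Hrho Hz HD. rewrite chi_expansion_sum_n.
  apply (is_series_ext (fun i => Cminus (chi_error_term k N L a rho z i)
    (sum_n (fun l => Cmult (expansion_coef k a z N l)
                           (polylog_term l (Cmult (Cpow (Cinv rho) a) (Cexp z)) i)) L))).
  { intros i. symmetry. apply chi_term_decomp; auto. intro H. rewrite H in Hz. simpl in Hz. lra. }
  apply (@is_series_minus C_AbsRing C_NormedModule); [exact HD|].
  apply (is_series_sum_n (fun l i => Cmult (expansion_coef k a z N l)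
                                          (polylog_term l (Cmult (Cpow (Cinv rho) a) (Cexp z)) i))).
  intros l Hl. apply (@is_series_scal_l C_AbsRing C_NormedModule).
  apply (is_series_polylog_term l L _ delta); auto. now apply (Cmod_twist_le k).
Qed.

Lemma chi_error_series_bound k L delta Cb : (1 <= k)%nat -> 0 < delta -> 0 < Cb ->
  exists M, forall rho a N z,
    primitive_root k rho -> (a <= k - 1)%nat -> (1 <= N)%nat -> fst z <= - delta -> Cmod z <= Cb ->
    is_series (chi_error_term k N L a rho z) (Csum (chi_error_term k N L a rho z)) /\
    Cmod (Csum (chi_error_term k N L a rho z)) <= M / INR N ^ L.
Proof.
  intros Hk Hdelta HCb.
  destruct (Rabs_bounded2_le (fun a l => bernpoly l (INR a / INR k)) k L) as [B [HB0 HB]].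
  destruct (bern_gen_sub_laurent_bound L (delta / Cb) B) as [K HK];
    [now apply Rdiv_lt_0_compat | exact HB0 |].
  destruct (pow_mult_geom_le L delta Hdelta) as [A [HA HAq]].
  pose proof (exp_neg_half_range delta Hdelta) as Hq. set (q := exp (- delta / 2)) in *.
  exists (Rabs K * (INR k * Cb) ^ L * A / (1 - q)).
  intros rho a N z Hrho Ha HN Hz HzCb.
  assert (Hk0 : 0 < INR k) by (apply lt_0_INR; lia).
  assert (HN0 : 0 < INR N) by (apply lt_0_INR; lia).
  assert (Hlam : 0 <= INR a / INR k <= 1).
  { split; [apply Rdiv_le_0_compat; auto using pos_INR|].
    apply (Rmult_le_reg_r (INR k)); auto. field_simplify; [apply le_INR; lia | lra]. }
  set (W := Rabs K * (INR k * Cb / INR N) ^ L).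
  assert (HW : 0 <= W) by (apply Rmult_le_pos; [apply Rabs_pos | apply pow_le, Rdiv_le_0_compat; nra]).
  replace (Rabs K * (INR k * Cb) ^ L * A / (1 - q) / INR N ^ L) with (W * A / (1 - q))
    by (unfold W, Rdiv; rewrite Rpow_mult_distr, pow_inv; field; split; [apply pow_nonzero|]; lra).
  apply (is_series_geom_dominated _ (W * A) q); [now apply Rmult_le_pos | exact Hq |].
  intros i. eapply Rle_trans.
  - apply (Cmod_chi_error_term_le k N delta Cb z); auto.
    + intros x Hx Hsec. apply HK; auto. intros l Hl. apply HB; lia.
    + now apply (Cmod_twist_le k).
  - fold W. rewrite (Rmult_assoc W). apply Rmult_le_compat_l; [exact HW | apply HAq].
Qed.

Theorem proposition4p3 (k L : nat) (delta Cb : R) :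
  (1 <= k)%nat -> (1 <= L)%nat -> 0 < delta -> 0 < Cb ->
  exists M : R,
    forall (rho : Cplx) (a N : nat) (z : Cplx),
      primitive_root k rho -> (a <= k - 1)%nat -> (1 <= N)%nat ->
      Defs.Re z <= - delta -> Defs.Cmod z <= Cb ->
      Defs.Cmod (Csub (Defs.Copp (chi k rho a (Defs.Copp z) N)) (chi_expansion k rho a z N L))
        <= M / (INR N) ^ L.
Proof.
  intros Hk _ Hdelta HCb. (* the bound holds for [L = 0] as well *)
  destruct (chi_error_series_bound k L delta Cb Hk Hdelta HCb) as [M HM].
  exists M. intros rho a N z Hrho Ha HN Hz HzCb.
  destruct (HM rho a N z Hrho Ha HN Hz HzCb) as [HD HDM].
  change (Cmod (Cminus (Copp (chi k rho a (Copp z) N)) (chi_expansion k rho a z N L))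
            <= M / INR N ^ L).
  rewrite chi_Csum, (Csum_is_series _ _ (is_series_chi_term k rho a z N L delta Hk HN Hdelta Hrho Hz HD)).
  replace (Cminus (Copp (Cminus (Csum (chi_error_term k N L a rho z)) (chi_expansion k rho a z N L)))
                  (chi_expansion k rho a z N L))
    with (Copp (Csum (chi_error_term k N L a rho z))) by ring.
  now rewrite Cmod_opp.
Qed.
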